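(* Let $P\in\mathbb N_+$, $M\ge2$, $d=\lceil 2P\ln M\rceil$, and let $\mathcal Y$ be a finite set. Let $\mu^{(1)}_1,\dots,\mu^{(1)}_M,\mu^{(2)}_1,\dots,\mu^{(2)}_M:\mathcal Y\to\{0,1/P,2/P,\dots,1\}$. For a finite sequence $\mathbf y=(y_1,\dots,y_n)\in\mathcal Y^n$ define the row vector $\overline{\mathbf M}_{\mathbf y}\in\mathbb R^{2M}$ by $\overline{\mathbf M}_{\mathbf y}=\big(\prod_{q=1}^n\mu^{(1)}_1(y_q),\dots,\prod_{q=1}^n\mu^{(1)}_M(y_q),\prod_{q=1}^n\mu^{(2)}_1(y_q),\dots,\prod_{q=1}^n\mu^{(2)}_M(y_q)\big)$, with $\overline{\mathbf M}_{\emptyset}=(1,\dots,1)$. Then for every $\mathbf y$ of length $n>d$, the vector $\overline{\mathbf M}_{\mathbf y}$ lies in the linear span of $\{\overline{\mathbf M}_{\mathbf y_J}: J\subseteq[n],\ |J|\le d\}$, where $\mathbf y_J=(y_j)_{j\in J}$ (with $\mathbf y_\emptyset=\emptyset$).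
   Context: $\ln$ denotes the natural logarithm. In the paper's application $\mathcal Y=\mathcal S\times\mathcal A\times\mathcal Z$ and $\mu^{(b)}_m(y)$ is the probability of reward $z$ at state–action $(s,a)$ in context $m$ of model $b$. *)

From HB Require Import structures.
From mathcomp Require Import all_boot all_order all_algebra.
From mathcomp Require Import all_classical all_reals all_analysis.
Set Implicit Arguments. Unset Strict Implicit. Unset Printing Implicit Defensive.
Import Order.TTheory GRing.Theory Num.Theory.
Local Open Scope ring_scope.

Definition dbound (R : realType) (P M : nat) : int :=
  Num.ceil (2 * P%:R * ln (M%:R : R)).

Definition Mbar (R : realType) (Y : finType) (M : nat)
  (mu1 mu2 : 'I_M -> Y -> R) (s : seq Y) : 'rV[R]_(M + M) :=
  row_mx (\row_(m < M) \prod_(x <- s) mu1 m x)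
         (\row_(m < M) \prod_(x <- s) mu2 m x).

(* y_J = (y_j)_{j in J}, in increasing order of indices *)
Definition subseqJ (Y : Type) (n : nat) (y : 'I_n -> Y) (J : {set 'I_n}) : seq Y :=
  [seq y j | j <- enum J].

From HB Require Import structures.
From mathcomp Require Import all_boot all_order all_algebra.
From mathcomp Require Import all_classical all_reals all_analysis.
From mathcomp Require Import lra ring zify.
Import Order.TTheory GRing.Theory Num.Theory.
Local Open Scope ring_scope.

(* The quantization is what makes long products redundant. If T is a set of
   t indices with 2M P^t < (P+1)^t, a union bound over the 2M coordinates
   yields r : T -> {0, ..., P} agreeing, at some q in T, with P mu(y_q) for
   every coordinate mu. Then prod_(q in T) (mu(y_q) - r(q)/P) = 0 for every
   coordinate, and expanding the product writes the vector of T as a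
   combination, with coefficients independent of the coordinate, of the
   vectors of the proper subsets of T. Induction on |T| reduces everything to
   |J| <= d, and 2M P^t < (P+1)^t for t > d because
   ln (1 + 1/P) >= 2/(2P+1). *)

Section ExpBounds.
Variable R : realType.

Lemma expR_mul2B_le (y : R) : 0 <= y -> expR y * (2 - y) <= 2 + y.
Proof.
move=> y0.
pose h : R -> R := (expR * (cst 2 - id)) - (cst 2 + id).
have h' x : is_derive x (1 : R) h (expR x * (1 - x) - 1).
  apply: is_derive_eq.
  change (expR x * (0 - 1) + (2 - x) * expR x - (0 + 1) = expR x * (1 - x) - 1).
  ring.
have h'_le0 x : expR x * (1 - x) - 1 <= 0.
  rewrite subr_le0; have [x1|x1] := leP x 1; last first.
    by rewrite (@le_trans _ _ 0) // mulr_ge0_le0 ?expR_ge0 // subr_le0 ltW.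
  apply: le_trans (ler_wpM2l (expR_ge0 x) (expR_ge1Dx (- x))) _.
  by rewrite -expRD subrr expR0.
have [-> | y_neq0] := eqVneq y 0; first by rewrite expR0; lra.
have y_gt0 : 0 < y by rewrite lt_def y_neq0 y0.
have h_cont := derivable_within_continuous (f := h) (i := `[0, y]%R)
  (fun x _ => @ex_derive _ _ _ _ _ _ _ (h' x)).
have [c _ hc] := MVT y_gt0 (fun x _ => h' x) h_cont.
have : h y - h 0 <= 0 by rewrite hc mulr_le0_ge0 ?h'_le0 ?subr0.
rewrite /h /cst /=.
change (expR y * (2 - y) - (2 + y) - (expR 0 * (2 - 0) - (2 + 0)) <= 0 ->
        expR y * (2 - y) <= 2 + y).
rewrite expR0; lra.
Qed.

Lemma expR_2_div_mul_le (x : R) : 0 <= x -> expR (2 / (2 * x + 1)) * x <= x + 1.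
Proof.
move=> x0; set y := 2 / (2 * x + 1).
have hy : y * (2 * x + 1) = 2 by rewrite /y divfK //; lra.
have y0 : 0 <= y by rewrite divr_ge0 //; lra.
have := expR_mul2B_le y y0; have := expR_ge0 y; nra.
Qed.

Lemma ln2_lt1 : ln (2 : R) < 1.
Proof.
rewrite -[X in _ < X]expRK ltr_ln ?posrE ?expR_gt0 //.
by have := expR_gt1Dx (oner_neq0 R); rewrite -[1 + 1 : R]/2.
Qed.

End ExpBounds.

Lemma dbound_ge0 (R : realType) (P M : nat) : (0 < M)%N -> 0 <= dbound R P M.
Proof.
move=> M0; rewrite ceil_ge0 (@lt_le_trans _ _ 0) ?ltrN10 //.
by rewrite !mulr_ge0 ?ler0n // ln_ge0 // ler1n.
Qed.

Lemma ltn_mul_expn_dbound (R : realType) (P M t : nat) :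
  (0 < P)%N -> (2 <= M)%N -> dbound R P M < t%:Z -> ((M + M) * P ^ t < P.+1 ^ t)%N.
Proof.
move=> P0 M2 hdt.
set L := ln (M%:R : R); set y : R := 2 / (2 * P%:R + 1).
have M_gt0 : (0 : R) < M%:R by rewrite ltr0n; lia.
have P_ge1 : (1 : R) <= P%:R by rewrite ler1n.
have t_ge : 2 * P%:R * L + 1 <= t%:R.
  have : (dbound R P M + 1)%:~R <= (t%:Z)%:~R :> R by rewrite ler_int lezD1.
  by have := ceil_ge (2 * P%:R * L); rewrite intrD -pmulrn; lra.
have ln2_le : ln (2 : R) <= L by rewrite ler_ln ?posrE // ler_nat.
have lnMM : ln ((M + M)%:R : R) = ln 2 + L.
  have -> : (M + M)%:R = 2 * M%:R :> R by rewrite natrD; ring.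
  by rewrite lnM ?posrE.
have hy : y * (2 * P%:R + 1) = 2 by rewrite /y divfK //; lra.
have lnMM_lt : ln ((M + M)%:R : R) < t%:R * y.
  rewrite lnMM -(@ltr_pM2r _ (2 * P%:R + 1)); last lra.
  have := ln2_lt1 R; have : 0 <= (P%:R - 1) * (L - ln 2) :> R by apply: mulr_ge0; lra.
  rewrite -mulrA hy; nra.
rewrite -(ltr_nat R) natrM !natrX.
apply: (lt_le_trans (y := expR (t%:R * y) * P%:R ^+ t)).
  rewrite ltr_pM2r ?exprn_gt0 ?(lt_le_trans ltr01) //.
  by rewrite -ltr_ln ?posrE ?expR_gt0 ?expRK // ltr0n; lia.
rewrite expRM_natl -exprMn; apply: lerXn2r; rewrite ?nnegrE ?mulr_ge0 ?expR_ge0 //.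
by rewrite -natr1 expR_2_div_mul_le.
Qed.

Section Hitting.
Local Open Scope nat_scope.

Lemma card_fibers {K : finType} {m : nat} (A : {set K}) (h : K -> 'I_m) :
  \sum_(j < m) #|[set k in A | h k == j]| = #|A|.
Proof.
rewrite -sum1_card (partition_big h xpredT) //=.
by apply: eq_bigr => j _; rewrite -sum1_card; apply: eq_bigl => k; rewrite inE.
Qed.

Lemma exists_large_fiber {K : finType} {P : nat} (A : {set K}) (h : K -> 'I_P.+1) :
  exists j : 'I_P.+1, #|A| <= P.+1 * #|[set k in A | h k == j]|.
Proof.
case: (@arg_maxnP _ ord0 xpredT (fun j => #|[set k in A | h k == j]|)) => // j _ jmax.
exists j; rewrite -(card_fibers A h).
have -> : P.+1 * #|[set k in A | h k == j]| = \sum_(i < P.+1) #|[set k in A | h k == j]|.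
  by rewrite sum_nat_const card_ord.
by apply: leq_sum => i _; exact: jmax.
Qed.

Lemma exists_hitting_fun {K I : finType} {P : nat} (g : K -> I -> 'I_P.+1)
    (A : {set K}) (T : {set I}) :
  #|A| * P ^ #|T| < P.+1 ^ #|T| ->
  exists r : I -> 'I_P.+1, forall k, k \in A -> exists2 q, q \in T & g k q = r q.
Proof.
move hT: #|T| => t; elim: t T A hT => [|t IH] T A hT.
  rewrite !expn0 muln1 ltnS leqn0 => /eqP/cards0_eq ->.
  by exists (fun=> ord0) => k; rewrite inE.
move=> hA; have /card_gt0P[q0 q0T] : 0 < #|T| by rewrite hT.
have hT' : #|T :\ q0| = t by move: hT; rewrite (cardsD1 q0) q0T add1n => -[].
have [j hj] := exists_large_fiber A (fun k => g k q0).
pose B := [set k in A | g k q0 != j].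
have hB : #|[set k in A | g k q0 == j]| + #|B| = #|A|.
  rewrite -(cardsID [set k | g k q0 == j] A); congr (_ + _); apply: eq_card => k;
    by rewrite !inE andbC.
have hBt : #|B| * P ^ t < P.+1 ^ t.
  rewrite -(ltn_pmul2l (ltn0Sn P)) mulnA.
  apply: leq_ltn_trans (leq_mul (_ : P.+1 * #|B| <= P * #|A|) (leqnn _)) _; first by lia.
  by rewrite -mulnA mulnCA -!expnS.
have [r hr] := IH _ _ hT' hBt.
exists (fun q => if q == q0 then j else r q) => k kA.
have [e|ne] := eqVneq (g k q0) j; first by exists q0; rewrite ?eqxx.
have [|q] := hr k; first by rewrite inE kA ne.
by rewrite !inE => /andP[/negbTE qq0 qT] e; exists q; rewrite ?qq0.
Qed.

End Hitting.

Lemma prodr_hit_expansion {R : comNzRingType} {I : finType} (T : {set I}) (r : I -> R) :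
  exists w : {set I} -> R, forall x : I -> R, (exists2 q, q \in T & x q = r q) ->
    \prod_(q in T) x q = \sum_(J : {set I} | J \proper T) w J * \prod_(q in J) x q.
Proof.
pose G q := if q \in T then - r q else 1.
(* c J is the coefficient of prod_(q in J) x q in the expansion of
   prod_(q in T) (x q - r q); it vanishes unless J \subset T. *)
pose c (J : {set I}) := \prod_q (if q \in J then (q \in T)%:R else G q) : R.
have cT : c T = 1 by apply: big1 => q _; rewrite /G; case: (q \in T).
have c0 (J : {set I}) : ~~ (J \subset T) -> c J = 0.
  by case/subsetPn => q qJ qT; rewrite /c (bigD1 q) //= qJ (negbTE qT) mul0r.
exists (fun J => - c J); move=> x [q0 q0T xq0].
have expand : \prod_q ((if q \in T then x q else 0) + G q) =
              \sum_(J : {set I}) (\prod_(q in J) x q) * c J.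
  rewrite bigA_distr; apply: eq_bigr => J _.
  rewrite /c [\prod_(q in J) _]big_mkcond -big_split /=; apply: eq_bigr => q _.
  by case: (q \in J); case: (q \in T); rewrite ?mulr1 ?mulr0 ?mul1r.
have vanish : \prod_q ((if q \in T then x q else 0) + G q) = 0.
  by rewrite (bigD1 q0) //= /G q0T xq0 subrr mul0r.
move: expand; rewrite vanish (bigD1 T) //= cT mulr1 (bigID (fun J : {set I} => J \subset T)) /=.
rewrite [X in _ + (_ + X)]big1 => [|J /andP[_ /c0 ->]]; last by rewrite mulr0.
rewrite addr0 => /eqP; rewrite eq_sym addr_eq0 => /eqP ->; rewrite -sumrN.
by apply: eq_big => [J|J _]; rewrite ?finset.properEneq // mulrC mulNr.
Qed.

Definition lincomb_of {R : pzRingType} {V : lmodType R} {I : finType}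
    (F : I -> V) (P : pred I) (v : V) : Prop :=
  exists c : I -> R, v = \sum_(i | P i) c i *: F i.

Lemma lincomb_of_gen {R : pzRingType} {V : lmodType R} {I : finType}
    (F : I -> V) (P : pred I) (i : I) :
  P i -> lincomb_of F P (F i).
Proof.
move=> Pi; exists (fun j => (j == i)%:R).
rewrite (bigD1 i) //= eqxx scale1r big1 ?addr0 // => j /andP[_ /negbTE ->].
by rewrite scale0r.
Qed.

Lemma lincomb_of_sum {R : pzRingType} {V : lmodType R} {I J : finType}
    (F : I -> V) (P : pred I) (Q : pred J) (w : J -> R) (v : J -> V) :
  (forall j, Q j -> lincomb_of F P (v j)) ->
  lincomb_of F P (\sum_(j | Q j) w j *: v j).
Proof.
move=> hv.
have /fin_all_exists[c hc] :
    forall j, exists c : I -> R, Q j -> v j = \sum_(i | P i) c i *: F i.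
  move=> j; have [/hv[c ->]|_] := boolP (Q j); first by exists c.
  by exists (fun=> 0).
exists (fun i => \sum_(j | Q j) w j * c j i).
under eq_bigr => j Qj do rewrite hc // scaler_sumr.
rewrite exchange_big /=; apply: eq_bigr => i _.
by rewrite scaler_suml; apply: eq_bigr => j _; rewrite scalerA.
Qed.

Section QuantizedProducts.
Variables (R : comNzRingType) (N P : nat) (I : finType).
Variables (f : 'I_P.+1 -> R) (x : 'I_N -> I -> R).
Hypothesis x_quantized : forall k q, exists j, x k q = f j.

Definition prodv (T : {set I}) : 'rV[R]_N := \row_k \prod_(q in T) x k q.

Lemma prodv_proper_lincomb (T : {set I}) :
  (N * P ^ #|T| < P.+1 ^ #|T|)%N -> lincomb_of prodv (fun J => J \proper T) (prodv T).
Proof.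
move=> hT.
have /fin_all_exists[g xE] : forall k, exists g : I -> 'I_P.+1, forall q, x k q = f (g q).
  by move=> k; have /fin_all_exists := x_quantized k.
have [|r hr] := exists_hitting_fun g [set: 'I_N] T; first by rewrite finset.cardsT card_ord.
have [w hw] := prodr_hit_expansion T (f \o r).
exists w; apply/rowP => k; rewrite !mxE summxE hw.
  by apply: eq_bigr => J _; rewrite !mxE.
have [q qT gq] := hr k (finset.in_setT k).
by exists q; rewrite // xE gq.
Qed.

Variable d : nat.
Hypothesis large_reducible : forall t, (d < t)%N -> (N * P ^ t < P.+1 ^ t)%N.

Lemma prodv_small_lincomb (T : {set I}) :
  lincomb_of prodv (fun J => #|J| <= d)%N (prodv T).
Proof.
have [m] := ubnP #|T|; elim: m T => // m IH T /ltnSE hT.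
have [small|large] := leqP #|T| d; first exact: lincomb_of_gen.
have [w ->] := prodv_proper_lincomb T (large_reducible _ large).
apply: lincomb_of_sum => J /proper_card JT.
exact/IH/(leq_trans JT).
Qed.

End QuantizedProducts.

Arguments prodv {R N I} x T.
Arguments prodv_small_lincomb {R N P I f x} x_quantized {d} large_reducible T.

Definition mu_cat {R : realType} {Y : finType} {M : nat}
    (mu1 mu2 : 'I_M -> Y -> R) (k : 'I_(M + M)) : Y -> R :=
  match fintype.split k with inl m => mu1 m | inr m => mu2 m end.

Lemma MbarE (R : realType) (Y : finType) (M : nat) (mu1 mu2 : 'I_M -> Y -> R)
    (s : seq Y) :
  Mbar mu1 mu2 s = \row_k \prod_(z <- s) mu_cat mu1 mu2 k z.
Proof.
by apply/rowP => k; rewrite /Mbar /mu_cat !mxE; case: fintype.split => m; rewrite mxE.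
Qed.

Theorem lemma8 (R : realType) (Y : finType) (P M : nat)
  (hP : (0 < P)%N) (hM : (2 <= M)%N)
  (mu1 mu2 : 'I_M -> Y -> R)
  (hmu1 : forall m y, exists k : nat, (k <= P)%N /\ mu1 m y = k%:R / P%:R)
  (hmu2 : forall m y, exists k : nat, (k <= P)%N /\ mu2 m y = k%:R / P%:R)
  (n : nat) (y : 'I_n -> Y)
  (hn : dbound R P M < n%:Z) :
  exists c : {set 'I_n} -> R,
    Mbar mu1 mu2 [seq y i | i <- enum 'I_n] =
    \sum_(J : {set 'I_n} | (#|J|%:Z <= dbound R P M)) c J *: Mbar mu1 mu2 (subseqJ y J).
Proof.
have [d dE] : exists d : nat, dbound R P M = d%:Z.
  by exists `|dbound R P M|%N; rewrite gez0_abs // dbound_ge0 //; lia.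
pose x k q := mu_cat mu1 mu2 k (y q).
have x_quantized k q : exists j : 'I_P.+1, x k q = j%:R / P%:R.
  rewrite /x /mu_cat; case: fintype.split => m;
    [have [j [jP ->]] := hmu1 m (y q) | have [j [jP ->]] := hmu2 m (y q)];
    by exists (Ordinal (jP : (j < P.+1)%N)).
have large_reducible t : (d < t)%N -> ((M + M) * P ^ t < P.+1 ^ t)%N.
  by move=> dt; apply: (ltn_mul_expn_dbound R); rewrite // dE ltz_nat.
have prodvE (J : {set 'I_n}) : Mbar mu1 mu2 (subseqJ y J) = prodv x J.
  by apply/rowP => k; rewrite MbarE !mxE big_map big_enum.
have [c hc] := prodv_small_lincomb x_quantized large_reducible [set: 'I_n].
have -> : [seq y i | i <- enum 'I_n] = subseqJ y [set: 'I_n].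
  by rewrite /subseqJ; congr map; apply/eq_enum => i; rewrite !inE.
exists c; rewrite dE prodvE hc.
by apply: eq_big => [J|J _]; rewrite ?lez_nat ?prodvE.
Qed.
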